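(* For each $n\in\mathbb N$, let $\phi_n=(\phi_n(\theta),\theta\in\mathcal T)$ be a right-CE nonnegative supermartingale family, and suppose that the sequence $(\phi_n)$ is non-decreasing, i.e. for each $n$ and each $\theta\in\mathcal T$, $\phi_n(\theta)\le\phi_{n+1}(\theta)$ a.s. Then the family $\phi$ defined by $\phi(\theta)=\limsup_{n\to\infty}\phi_n(\theta)$, $\theta\in\mathcal T$, is a right-CE supermartingale family.
   Context: Filtered probability space $(\Omega,\mathcal F,(\mathcal F_t)_{0\le t\le T},P)$ satisfying the usual conditions, $\mathcal F=\mathcal F_T$, $\mathcal F_0$ trivial, $T\in(0,\infty)$. $\mathcal T$: stopping times valued in $[0,T]$. A family $\phi=(\phi(\theta),\theta\in\mathcal T)$ of $\overline{\mathbb R}$-valued random variables is admissible if each $\phi(\theta)$ is $\mathcal F_\theta$-measurable and $\phi(\theta)=\phi(\theta')$ a.s. on $\{\theta=\theta'\}$. An admissible $\phi$ with $E[\operatorname{ess\,sup}_\theta\phi(\theta)^-]<\infty$ is a supermartingale family if $E[\phi(\theta)\mid\mathcal F_{\theta'}]\le\phi(\theta')$ a.s. whenever $\theta\ge\theta'$ a.s. An admissible $\phi$ is right-CE if for all $\theta\in\mathcal T$ and all sequences $(\theta_n)\subset\mathcal T$ with $\theta_n\downarrow\theta$, $E[\phi(\theta)]=\lim_nE[\phi(\theta_n)]$. *)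

From HB Require Import structures.
From mathcomp Require Import all_boot all_order all_algebra.
From mathcomp Require Import all_classical all_reals all_analysis measurable_realfun.
Set Implicit Arguments. Unset Strict Implicit. Unset Printing Implicit Defensive.
Import Order.TTheory GRing.Theory Num.Theory numFieldNormedType.Exports.
Local Open Scope classical_set_scope.
Local Open Scope ring_scope.

Section Defs.
Context {d : measure_display} {T : measurableType d} {R : realType}.
Variable (P : probability T R).

Definition usual_filtration (Tm : R) (F : R -> set (set T)) : Prop :=
  (forall t, 0 <= t <= Tm -> sigma_algebra setT (F t)
                 /\ F t `<=` measurable) /\
      (forall s t, 0 <= s -> s <= t -> t <= Tm -> F s `<=` F t) /\
      (forall t, 0 <= t -> t < Tm ->
          F t = \bigcap_(s in [set s | t < s <= Tm]) F s) /\
      (forall N : set T, P.-negligible N -> F 0 N) /\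
      F Tm = measurable /\
      (forall A, F 0 A -> P A = 0%E \/ P A = 1%E).

Definition stopping_time (Tm : R) (F : R -> set (set T)) (th : T -> R) : Prop :=
  (forall x, 0 <= th x <= Tm) /\
  (forall t, 0 <= t <= Tm -> F t [set x | th x <= t]).

Definition F_at (Tm : R) (F : R -> set (set T)) (th : T -> R) : set (set T) :=
  [set A | measurable A /\
           forall t, 0 <= t <= Tm -> F t (A `&` [set x | th x <= t])].

Definition meas_wrt (G : set (set T)) (f : T -> \bar R) : Prop :=
  forall B : set (\bar R), measurable B -> G (f @^-1` B).

Definition cond_exp_version (G : set (set T)) (X Y : T -> \bar R) : Prop :=
  meas_wrt G Y /\
  forall A, G A -> (\int[P]_(x in A) Y x = \int[P]_(x in A) X x)%E.

Definition is_esssup (I : Type) (S : I -> Prop) (X : I -> T -> \bar R)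
    (Z : T -> \bar R) : Prop :=
  measurable_fun setT Z /\
  (forall i, S i -> {ae P, forall x, (X i x <= Z x)%E}) /\
  (forall Z' : T -> \bar R, measurable_fun setT Z' ->
     (forall i, S i -> {ae P, forall x, (X i x <= Z' x)%E}) ->
     {ae P, forall x, (Z x <= Z' x)%E}).

Definition admissible (Tm : R) (F : R -> set (set T))
    (phi : (T -> R) -> T -> \bar R) : Prop :=
  (forall th, stopping_time Tm F th -> meas_wrt (F_at Tm F th) (phi th)) /\
  (forall th th', stopping_time Tm F th -> stopping_time Tm F th' ->
     {ae P, forall x, th x = th' x -> phi th x = phi th' x}).

Definition supermartingale_family (Tm : R) (F : R -> set (set T))
    (phi : (T -> R) -> T -> \bar R) : Prop :=
  [/\ admissible Tm F phi,
      (exists Z, is_esssup (stopping_time Tm F)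
                   (fun th x => maxe (- phi th x)%E 0%E) Z
                 /\ (\int[P]_x Z x < +oo)%E)
    & (forall th th', stopping_time Tm F th -> stopping_time Tm F th' ->
         {ae P, forall x, th' x <= th x} ->
         exists Y, cond_exp_version (F_at Tm F th') (phi th) Y /\
                   {ae P, forall x, (Y x <= phi th' x)%E})].

Definition right_CE (Tm : R) (F : R -> set (set T))
    (phi : (T -> R) -> T -> \bar R) : Prop :=
  admissible Tm F phi /\
  forall (th : T -> R) (ths : nat -> T -> R),
    stopping_time Tm F th -> (forall n, stopping_time Tm F (ths n)) ->
    (forall x, nonincreasing_seq (fun n => ths n x)) ->
    (forall x, (fun n => ths n x) @ \oo --> th x) ->
    (fun n => (\int[P]_x phi (ths n) x)%E) @ \oo --> (\int[P]_x phi th x)%E.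

End Defs.

From HB Require Import structures.
From mathcomp Require Import all_boot all_order all_algebra.
From mathcomp Require Import all_classical all_reals all_analysis measurable_realfun.
Import Order.TTheory GRing.Theory Num.Theory numFieldNormedType.Exports.
Set Implicit Arguments. Unset Strict Implicit. Unset Printing Implicit Defensive.
Local Open Scope classical_set_scope.
Local Open Scope ring_scope.

(* Almost surely phi(th) is the nondecreasing limit of the phi_n(th), so
   everything reduces to monotone convergence.  For right continuity in
   expectation, E[phi_k(th_n)] is nondecreasing in k (monotone sequence) and in
   n (supermartingale property along th_n decreasing to th), so lim_n E[phi(th_n)]
   and E[phi(th)] are the same double supremum taken in the two orders.  For the
   supermartingale property, versions Y_n of E[phi_n(th) | F_th'] are a.s.
   nonnegative and nondecreasing in n, because a G-measurable Y whose integrals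
   over the sets of G dominate those of a G-measurable Y' satisfies Y' <= Y a.s.;
   monotone convergence on both sides then makes limsup_n Y_n a version of
   E[phi(th) | F_th'], and it is dominated by phi(th').  As phi >= 0, the
   essential supremum of the negative parts of phi is 0. *)

Section measurable_wrt.
Context d (T : measurableType d) (R : realType).
Local Open Scope ereal_scope.

Lemma meas_wrt_measurable_fun (G : set (set T)) (f : T -> \bar R) :
  G `<=` measurable -> meas_wrt G f -> measurable_fun setT f.
Proof. by move=> GM mf _ B mB; rewrite setTI; exact/GM/mf. Qed.

Variable G : set (set T).
Hypothesis sG : sigma_algebra setT G.

Lemma meas_wrtE (f : T -> \bar R) :
  meas_wrt G f <-> @measurable_fun _ _ (g_sigma_algebraType G) (\bar R) setT f.
Proof.
have GE := measurable_g_measurableTypeE sG.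
split=> [mf _ B mB|mf B mB]; first by rewrite setTI GE; exact: mf.
by have := mf measurableT B mB; rewrite setTI GE.
Qed.

Lemma sigma_algebraI A B : G A -> G B -> G (A `&` B).
Proof. by rewrite -(measurable_g_measurableTypeE sG); exact: measurableI. Qed.

Lemma meas_wrt_cst (c : \bar R) : meas_wrt G (cst c).
Proof. exact/meas_wrtE/measurable_cst. Qed.

Lemma meas_wrtD (f g : T -> \bar R) :
  meas_wrt G f -> meas_wrt G g -> meas_wrt G (f \+ g).
Proof. by move=> /meas_wrtE mf /meas_wrtE mg; exact/meas_wrtE/emeasurable_funD. Qed.

Lemma meas_wrt_limn_esup (f : (T -> \bar R)^nat) :
  (forall n, meas_wrt G (f n)) -> meas_wrt G (fun x => limn_esup (f ^~ x)).
Proof.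
move=> mf; apply/meas_wrtE.
apply: (@measurable_fun_limn_esup _ (g_sigma_algebraType G)) => n.
exact/meas_wrtE.
Qed.

Lemma meas_wrt_set_lee (f g : T -> \bar R) :
  meas_wrt G f -> meas_wrt G g -> G [set x | f x <= g x].
Proof.
move=> /meas_wrtE mf /meas_wrtE mg; rewrite -(measurable_g_measurableTypeE sG).
by rewrite -[X in _ X]setTI; exact: measurable_lee.
Qed.

End measurable_wrt.

Section integral_ae.
Context d (T : measurableType d) (R : realType) (mu : {measure set T -> \bar R}).
Local Open Scope ereal_scope.

Lemma ae_null_set (Q : T -> Prop) : {ae mu, forall x, Q x} ->
  exists N, [/\ measurable N, mu N = 0 & forall x, ~ N x -> Q x].
Proof.
move=> [N [mN muN sub]]; exists N; split => // x Nx.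
by apply: contrapT => Qx; exact: Nx (sub x Qx).
Qed.

Lemma integral_setD_null (D N : set T) (f : T -> \bar R) :
  measurable D -> measurable N -> mu N = 0 -> measurable_fun D f ->
  \int[mu]_(x in D) f x = \int[mu]_(x in D `\` N) f x.
Proof.
move=> mD mN muN mf; rewrite setDE integral_mkcondr.
apply: ae_eq_integral => //.
  by apply/(measurable_restrict _ (measurableC mN) mD)/(measurable_funS mD _ mf).
exists N; split => // x /= fx; apply: contrapT => Nx; apply: fx => Dx.
by rewrite /patch; case: ifPn => // /negP; rewrite inE.
Qed.

Lemma ae_le_integral (D : set T) (f g : T -> \bar R) : measurable D ->
  measurable_fun setT f -> measurable_fun setT g ->
  {ae mu, forall x, 0 <= f x} -> {ae mu, forall x, f x <= g x} ->
  \int[mu]_(x in D) f x <= \int[mu]_(x in D) g x.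
Proof.
move=> mD mf mg f0 fg.
have : {ae mu, forall x, 0 <= f x /\ f x <= g x}.
  by apply: filterS2 f0 fg => x.
move=> /ae_null_set[N [mN muN fgN]].
have mfD := measurable_funS measurableT (subsetT D) mf.
have mgD := measurable_funS measurableT (subsetT D) mg.
rewrite (integral_setD_null mD mN muN mfD) (integral_setD_null mD mN muN mgD).
apply: ge0_le_integral.
- exact: measurableD.
- by move=> x [_ /fgN[]].
- exact: measurable_funS mf.
- exact: measurable_funS mg.
- by move=> x [_ /fgN[]].
Qed.

Lemma integral_ge0_ae (D : set T) (f : T -> \bar R) : measurable D ->
  measurable_fun setT f -> {ae mu, forall x, 0 <= f x} ->
  0 <= \int[mu]_(x in D) f x.
Proof.
move=> mD mf f0; rewrite -(integral0 mu D).
by apply: ae_le_integral => //; exact: aeW.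
Qed.

Lemma cvg_monotone_convergence_ae (D : set T) (f : (T -> \bar R)^nat) :
  measurable D -> (forall n, measurable_fun setT (f n)) ->
  {ae mu, forall x, (forall n, 0 <= f n x) /\ nondecreasing_seq (f ^~ x)} ->
  (fun n => \int[mu]_(x in D) f n x) @ \oo -->
    \int[mu]_(x in D) limn_esup (f ^~ x).
Proof.
move=> mD mf /ae_null_set[N [mN muN fN]].
have mfD n := measurable_funS measurableT (subsetT D) (mf n).
rewrite (integral_setD_null mD mN muN); last exact: measurable_fun_limn_esup.
under eq_fun do rewrite (integral_setD_null mD mN muN (mfD _)).
rewrite (eq_integral (fun x => limn (f ^~ x))); last first.
  move=> x /set_mem [_ /fN[_ nd]].
  exact/is_cvg_limn_esupE/ereal_nondecreasing_is_cvgn.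
apply: cvg_monotone_convergence.
- exact: measurableD.
- by move=> n; exact: measurable_funS (mf n).
- by move=> n x [_ /fN[]].
- by move=> x [_ /fN[]].
Qed.

Lemma integral_gap_null (B : set T) (f g : T -> \bar R) (e : R) : measurable B ->
  measurable_fun B f -> measurable_fun B g -> (0 < e)%R ->
  (forall x, B x -> 0 <= g x) -> (forall x, B x -> g x + e%:E <= f x) ->
  \int[mu]_(x in B) f x <= \int[mu]_(x in B) g x ->
  \int[mu]_(x in B) g x < +oo -> mu B = 0.
Proof.
move=> mB mf mg e0 g0 gf fg gfin.
have e0' x : B x -> 0 <= cst e%:E x by rewrite /= lee_fin ltW.
have : \int[mu]_(x in B) (g x + cst e%:E x) <= \int[mu]_(x in B) g x.
  apply: le_trans fg; apply: ge0_le_integral => //.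
  - by move=> x Bx; apply: adde_ge0; [exact: g0|exact: e0'].
  - by apply: emeasurable_funD => //; exact: measurable_cst.
rewrite (ge0_integralD _ mB g0 mg e0' (measurable_cst _)) integral_cst //.
have gfn : \int[mu]_(x in B) g x \is a fin_num.
  by rewrite ge0_fin_numE // integral_ge0.
rewrite -[leRHS]adde0 leeD2lE // pmule_rle0 ?lte_fin // => muB0.
by apply/eqP; rewrite eq_le measure_ge0 andbT.
Qed.

End integral_ae.

Section extended_real_sequences.
Context (R : realType).
Local Open Scope ereal_scope.

Lemma lee_limn_esup (u v : (\bar R)^nat) : (forall n, u n <= v n) ->
  limn_esup u <= limn_esup v.
Proof.
move=> uv; rewrite !limn_esup_lim; apply: lee_lim; [exact: is_cvg_esups..|].
apply: nearW => n; apply: ge_ereal_sup => _ [k /= nk <-].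
by apply: le_trans (uv k) _; apply: ereal_sup_ubound; exists k.
Qed.

Lemma limn_esup_ge0 (u : (\bar R)^nat) : (forall n, 0 <= u n) -> 0 <= limn_esup u.
Proof. by apply: limf_esup_ge0; exact: filter_not_empty. Qed.

Lemma ereal_nondecreasing_cvgn_sup (u : (\bar R)^nat) l :
  nondecreasing_seq u -> u @ \oo --> l -> l = ereal_sup (range u).
Proof.
move=> nd ul; rewrite -(cvg_lim _ ul) //.
by rewrite (cvg_lim _ (ereal_nondecreasing_cvgn nd)).
Qed.

Lemma ereal_sup_range_comm (a : nat -> nat -> \bar R) :
  ereal_sup (range (fun n => ereal_sup (range (a ^~ n)))) =
  ereal_sup (range (fun k => ereal_sup (range (a k)))).
Proof.
apply/eqP; rewrite eq_le; apply/andP; split;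
  apply: ge_ereal_sup => _ [i _ <-]; apply: ge_ereal_sup => _ [j _ <-].
- apply: (@le_trans _ _ (ereal_sup (range (a j)))); apply: ereal_sup_ubound.
  + by exists i.
  + by exists j.
- apply: (@le_trans _ _ (ereal_sup (range (a ^~ j)))); apply: ereal_sup_ubound.
  + by exists i.
  + by exists j.
Qed.

Lemma lte_add_invr (y z : \bar R) : y < z ->
  exists k : nat, y + (k.+1%:R^-1)%:E <= z.
Proof.
case: y => [r||]; last by move=> _; exists 0%N; rewrite addNye leNye.
- case: z => [s||] //; last by move=> _; exists 0%N; exact: leey.
  by rewrite lte_fin => /ltr_add_invr[k /ltW]; exists k; rewrite -EFinD lee_fin.
- by rewrite ltNge leey.
Qed.

Lemma ltey_le_nat (y : \bar R) : y < +oo -> exists k : nat, y <= k%:R%:E.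
Proof.
case: y => [r _||] //; last by move=> _; exists 0%N; exact: leNye.
exists (Num.Def.archi_bound `|r|)%R; rewrite lee_fin.
exact: le_trans (ler_norm r) (ltW (archi_boundP (normr_ge0 r))).
Qed.

End extended_real_sequences.

Section conditional_expectation.
Context d (T : measurableType d) (R : realType) (P : probability T R).
Variable G : set (set T).
Hypotheses (sG : sigma_algebra setT G) (GM : G `<=` measurable).
Local Open Scope ereal_scope.

Lemma ae_ge0_of_integral_ge0 (Y : T -> \bar R) : meas_wrt G Y ->
  (forall A, G A -> 0 <= \int[P]_(x in A) Y x) -> {ae P, forall x, 0 <= Y x}.
Proof.
move=> mYG Y0; have mY := meas_wrt_measurable_fun GM mYG.
pose B k := [set x | Y x + (k.+1%:R^-1)%:E <= 0].
have GB k : G (B k).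
  apply: (meas_wrt_set_lee sG (f := Y \+ cst _) (g := cst 0)).
    by apply: meas_wrtD => //; exact: meas_wrt_cst.
  exact: meas_wrt_cst.
apply: (@negligibleS _ _ _ _ (\bigcup_k B k)).
  by move=> x /negP; rewrite -ltNge => /lte_add_invr[k Bx]; exists k.
apply: negligible_bigcup => k; have mB := GM (GB k); apply/negligibleP => //.
have Yle0 x : B k x -> Y x <= 0.
  by apply: le_trans; rewrite leeDl // lee_fin invr_ge0.
apply: (@integral_gap_null _ _ _ P (B k) (fun x => - Y x) (cst 0) k.+1%:R^-1)
  => //.
- by apply: measurableT_comp => //; exact: measurable_funS mY.
- by move=> x; rewrite /B /= add0e leeNr -leeBrDr // sub0e.
- rewrite integral0 -[leLHS]oppeK -integral_ge0N; last first.
    by move=> x /Yle0; rewrite leeNr oppe0.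
  by under eq_integral do rewrite oppeK; rewrite leeNl oppe0; exact: Y0.
- by rewrite integral0 ltry.
Qed.

Lemma ae_le_of_integral_le (Y1 Y2 : T -> \bar R) : meas_wrt G Y1 -> meas_wrt G Y2 ->
  {ae P, forall x, 0 <= Y2 x} ->
  (forall A, G A -> \int[P]_(x in A) Y1 x <= \int[P]_(x in A) Y2 x) ->
  {ae P, forall x, Y1 x <= Y2 x}.
Proof.
move=> mY1G mY2G Y20 Y12.
have mY1 := meas_wrt_measurable_fun GM mY1G.
have mY2 := meas_wrt_measurable_fun GM mY2G.
pose D m k := [set x | 0 <= Y2 x] `&` [set x | Y2 x <= k%:R%:E]
  `&` [set x | Y2 x + (m.+1%:R^-1)%:E <= Y1 x].
have GD m k : G (D m k).
  apply: sigma_algebraI => //; first apply: sigma_algebraI => //.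
  - exact: (meas_wrt_set_lee sG (meas_wrt_cst sG 0) mY2G).
  - exact: (meas_wrt_set_lee sG mY2G (meas_wrt_cst sG _)).
  - exact: (meas_wrt_set_lee sG (meas_wrtD sG mY2G (meas_wrt_cst sG _)) mY1G).
(* On D m k, Y2 is integrable and exceeded by Y1 by at least 1/(m+1), so D m k
   is null by integral_gap_null; together with [Y2 < 0] these sets cover
   [Y2 < Y1]. *)
apply: (@negligibleS _ _ _ _
    ([set x | Y2 x < 0] `|` \bigcup_m \bigcup_k D m k)).
  move=> x /negP; rewrite -ltNge => Y21.
  have [Y2x0|] := leP 0 (Y2 x); last by left.
  have [m Y2m] := lte_add_invr Y21.
  have [k Y2k] := ltey_le_nat (lt_le_trans Y21 (leey _)).
  by right; exists m => //; exists k.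
apply: negligibleU.
  by apply: negligibleS Y20 => x /= Y2x0; apply/negP; rewrite -ltNge.
apply: negligible_bigcup => m; apply: negligible_bigcup => k.
have mD := GM (GD m k); apply/negligibleP => //.
apply: (@integral_gap_null _ _ _ P (D m k) Y1 Y2 (m.+1%:R^-1)) => //.
- exact: measurable_funS mY1.
- exact: measurable_funS mY2.
- by move=> x [[]].
- by move=> x [].
- exact: Y12.
- apply: (@le_lt_trans _ _ (\int[P]_(x in D m k) cst (k%:R)%:E x)).
    by apply: ge0_le_integral => //; [move=> x [[]]|exact: measurable_funS mY2|
      move=> x [[]]].
  rewrite integral_cst // lte_mul_pinfty //.
  exact: le_lt_trans (probability_le1 P mD) (ltry _).
Qed.

Lemma cond_exp_version_ge0 (X Y : T -> \bar R) : measurable_fun setT X ->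
  {ae P, forall x, 0 <= X x} -> cond_exp_version P G X Y ->
  {ae P, forall x, 0 <= Y x}.
Proof.
move=> mX X0 [mYG XY]; apply: ae_ge0_of_integral_ge0 => // A GA.
by rewrite XY //; exact: integral_ge0_ae (GM GA) mX X0.
Qed.

Lemma cond_exp_version_limn_esup (X Y : (T -> \bar R)^nat) :
  (forall n, measurable_fun setT (X n)) ->
  {ae P, forall x, (forall n, 0 <= X n x) /\ nondecreasing_seq (X ^~ x)} ->
  (forall n, cond_exp_version P G (X n) (Y n)) ->
  cond_exp_version P G (fun x => limn_esup (X ^~ x)) (fun x => limn_esup (Y ^~ x)).
Proof.
move=> mX Xmono XY.
have mYG n : meas_wrt G (Y n) by case: (XY n).
have mY n := meas_wrt_measurable_fun GM (mYG n).
have X0 n : {ae P, forall x, 0 <= X n x} by apply: filterS Xmono => x [].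
have Y0 n : {ae P, forall x, 0 <= Y n x}.
  exact: cond_exp_version_ge0 (mX n) (X0 n) (XY n).
have Y_nd n : {ae P, forall x, Y n x <= Y n.+1 x}.
  apply: ae_le_of_integral_le => // A GA; rewrite (XY n).2 // (XY n.+1).2 //.
  apply: ae_le_integral (GM GA) (mX n) (mX n.+1) (X0 n) _.
  by apply: filterS Xmono => x [_ nd]; exact: nd (leqnSn n).
have Ymono : {ae P, forall x, (forall n, 0 <= Y n x) /\ nondecreasing_seq (Y ^~ x)}.
  apply: filterS2 (ae_foralln Y0) (ae_foralln Y_nd) => x Y0x Y_ndx.
  by split => //; exact/nondecreasing_seqP.
split; first exact: meas_wrt_limn_esup.
move=> A GA; have mA := GM GA.
have := cvg_monotone_convergence_ae mA mY Ymono.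
have -> : (fun n => \int[P]_(x in A) Y n x) = (fun n => \int[P]_(x in A) X n x).
  by apply/funext => n; exact: (XY n).2.
move=> cvgY; rewrite -(cvg_lim _ cvgY) //.
by rewrite (cvg_lim _ (cvg_monotone_convergence_ae mA mX Xmono)).
Qed.

End conditional_expectation.

Section stopping_times.
Context d (T : measurableType d) (R : realType) (P : probability T R).
Variables (Tm : R) (F : R -> set (set T)).
Hypothesis uF : usual_filtration P Tm F.

Let F_measurableE t : 0 <= t <= Tm -> (F t).-sigma.-measurable = F t.
Proof. by case: uF => sF _ /sF[/measurable_g_measurableTypeE]. Qed.

Lemma F_at_measurable th : F_at Tm F th `<=` measurable.
Proof. by move=> A []. Qed.

Lemma F_at_setT th : stopping_time Tm F th -> F_at Tm F th setT.
Proof. by move=> [_ thF]; split => // t t01; rewrite setTI; exact: thF. Qed.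

Lemma F_at_sigma_algebra th : stopping_time Tm F th ->
  sigma_algebra setT (F_at Tm F th).
Proof.
move=> [_ thF]; split.
- split => [|t t01]; first exact: measurable0.
  by rewrite set0I -F_measurableE //; exact: measurable0.
- move=> A [mA FA]; split => [|t t01]; first exact: measurableD.
  have -> : (setT `\` A) `&` [set x | th x <= t] =
            [set x | th x <= t] `\` (A `&` [set x | th x <= t]).
    by rewrite setTD setDIr setDv setU0 setDE setIC.
  by rewrite -F_measurableE //; apply: measurableD; rewrite F_measurableE //;
    [exact: thF|exact: FA].
- move=> A FA; split => [|t t01].
    by apply: bigcupT_measurable => k; case: (FA k).
  rewrite setI_bigcupl -F_measurableE //; apply: bigcupT_measurable => k.
  by rewrite F_measurableE //; case: (FA k) => _; exact.
Qed.

Lemma stopping_time0 : 0 < Tm -> stopping_time Tm F (fun=> 0).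
Proof.
move=> Tm0; split => [x|t t01]; first by rewrite lexx ltW.
have -> : [set x : T | 0 <= t] = setT.
  by apply/seteqP; split => x //= _; case/andP: t01.
by rewrite -F_measurableE //; exact: measurableT.
Qed.

End stopping_times.
Arguments F_at_measurable {d T R Tm F th}.

Section monotone_limit_of_supermartingale_families.
Context d (T : measurableType d) (R : realType) (P : probability T R).
Variables (Tm : R) (F : R -> set (set T)) (phin : nat -> (T -> R) -> T -> \bar R).
Local Notation ST := (stopping_time Tm F).
Local Notation phi := (fun th x => limn_esup (fun n => phin n th x)).
Hypothesis uF : usual_filtration P Tm F.
Hypothesis phin_right_CE : forall n, right_CE P Tm F (phin n).
Hypothesis phin_super : forall n, supermartingale_family P Tm F (phin n).
Hypothesis phin_ge0 : forall n th, ST th -> {ae P, forall x, (0 <= phin n th x)%E}.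
Hypothesis phin_nd : forall n th, ST th ->
  {ae P, forall x, (phin n th x <= phin n.+1 th x)%E}.
Local Open Scope ereal_scope.

Let admissible_phin n : admissible P Tm F (phin n).
Proof. by case: (phin_super n). Qed.

Lemma measurable_phin n th : ST th -> measurable_fun setT (phin n th).
Proof.
move=> /(admissible_phin n).1.
exact: meas_wrt_measurable_fun F_at_measurable.
Qed.

Lemma ae_phin_monotone th : ST th -> {ae P, forall x,
  (forall n, 0 <= phin n th x) /\ nondecreasing_seq (fun n => phin n th x)}.
Proof.
move=> s; have ge0 := ae_foralln (fun n => phin_ge0 n s).
apply: filterS2 ge0 (ae_foralln (fun n => phin_nd n s)) => x ge0x ndx.
by split => //; exact/nondecreasing_seqP.
Qed.

Lemma ae_phi_ge0 th : ST th -> {ae P, forall x, 0 <= phi th x}.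
Proof.
move=> s; apply: filterS (ae_foralln (fun n => phin_ge0 n s)) => x.
exact: limn_esup_ge0.
Qed.

Lemma admissible_phi : admissible P Tm F phi.
Proof.
split=> [th s|th th' s s'].
  apply: (meas_wrt_limn_esup (F_at_sigma_algebra uF s) (f := phin ^~ th)) => n.
  exact: (admissible_phin n).1.
have := ae_foralln (fun n => (admissible_phin n).2 th th' s s').
apply: filterS => x eq_n e.
by congr limn_esup; apply/funext => n; exact: eq_n.
Qed.

Lemma integral_phin_le n th th' : ST th -> ST th' ->
  {ae P, forall x, (th' x <= th x)%R} ->
  \int[P]_x phin n th x <= \int[P]_x phin n th' x.
Proof.
move=> s s' le; have [_ _ /(_ th th' s s' le) [Y [YX Yle]]] := phin_super n.
have sG := F_at_sigma_algebra uF s'.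
rewrite -(YX.2 setT (F_at_setT s')).
apply: ae_le_integral => //.
- exact: meas_wrt_measurable_fun F_at_measurable YX.1.
- exact: measurable_phin.
- exact: (cond_exp_version_ge0 sG F_at_measurable (measurable_phin n s)
    (phin_ge0 n s) YX).
Qed.

Lemma integral_phiE th : ST th ->
  \int[P]_x phi th x = ereal_sup (range (fun n => \int[P]_x phin n th x)).
Proof.
move=> s; apply: ereal_nondecreasing_cvgn_sup.
  apply/nondecreasing_seqP => n.
  apply: ae_le_integral => //; [exact: measurable_phin..|exact: phin_ge0|].
  exact: phin_nd.
exact: (cvg_monotone_convergence_ae measurableT (f := phin ^~ th)
  (fun n => measurable_phin n s) (ae_phin_monotone s)).
Qed.

Lemma right_CE_phi : right_CE P Tm F phi.
Proof.
split=> [|th ths s ss ths_noni ths_cvg]; first exact: admissible_phi.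
pose a n k := \int[P]_x phin n (ths k) x.
have a_nd n : nondecreasing_seq (a n).
  apply/nondecreasing_seqP => k; apply: integral_phin_le => //.
  by apply: aeW => x; exact: ths_noni.
have phin_th : (fun n => \int[P]_x phin n th x) = fun n => ereal_sup (range (a n)).
  apply/funext => n; apply: ereal_nondecreasing_cvgn_sup (a_nd n) _.
  exact: (phin_right_CE n).2.
have phi_ths : (fun k => \int[P]_x phi (ths k) x) =
    fun k => ereal_sup (range (a ^~ k)).
  by apply/funext => k; exact: integral_phiE.
rewrite phi_ths integral_phiE // phin_th -ereal_sup_range_comm.
apply: ereal_nondecreasing_cvgn; apply/nondecreasing_seqP => k.
apply: ge_ereal_sup => _ [n _ <-]; apply: le_trans (a_nd n _ _ (leqnSn k)) _.
by apply: ereal_sup_ubound; exists n.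
Qed.

Lemma cond_exp_phi th th' : ST th -> ST th' ->
  {ae P, forall x, (th' x <= th x)%R} ->
  exists Y, cond_exp_version P (F_at Tm F th') (phi th) Y /\
            {ae P, forall x, Y x <= phi th' x}.
Proof.
move=> s s' le.
have /choice[Y YX] n : exists Y, cond_exp_version P (F_at Tm F th') (phin n th) Y
    /\ {ae P, forall x, Y x <= phin n th' x}.
  by have [_ _] := phin_super n; exact.
exists (fun x => limn_esup (Y ^~ x)); split.
  apply: (cond_exp_version_limn_esup (F_at_sigma_algebra uF s')
    F_at_measurable _ (ae_phin_monotone s)).
  - by move=> n; exact: measurable_phin.
  - by move=> n; exact: (YX n).1.
apply: filterS (ae_foralln (fun n => (YX n).2)) => x Yle.
exact: lee_limn_esup.
Qed.

Lemma esssup_negpart_phi : (0 < Tm)%R ->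
  is_esssup P ST (fun th x => maxe (- phi th x) 0) (cst 0).
Proof.
move=> Tm0; split; [exact: measurable_cst|split].
- move=> th s; apply: filterS (ae_phi_ge0 s) => x phi0.
  by rewrite ge_max lexx andbT leeNl oppe0.
- move=> Z _ negpartZ; apply: filterS (negpartZ _ (stopping_time0 uF Tm0)) => x.
  by apply: le_trans; rewrite le_max lexx orbT.
Qed.

End monotone_limit_of_supermartingale_families.

Theorem lemma3p6 (d : measure_display) (T : measurableType d) (R : realType)
    (P : probability T R) (Tm : R) (F : R -> set (set T))
    (phin : nat -> (T -> R) -> T -> \bar R) :
  0 < Tm ->
  usual_filtration P Tm F ->
  (forall n, right_CE P Tm F (phin n)) ->
  (forall n, supermartingale_family P Tm F (phin n)) ->
  (forall n th, stopping_time Tm F th -> {ae P, forall x, (0 <= phin n th x)%E}) ->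
  (forall n th, stopping_time Tm F th ->
     {ae P, forall x, (phin n th x <= phin n.+1 th x)%E}) ->
  right_CE P Tm F (fun th x => limn_esup (fun n => phin n th x)) /\
  supermartingale_family P Tm F (fun th x => limn_esup (fun n => phin n th x)).
Proof.
move=> Tm0 uF rce smf ge0 nd; split; first exact: right_CE_phi.
split; [exact: admissible_phi| |exact: cond_exp_phi].
exists (cst 0%E); split; first exact: esssup_negpart_phi.
by rewrite integral0 ltry.
Qed.
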